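(* Let $\mathsf{\Sigma}\in\mathbb{R}^{N\times N_S}$ and $\mathsf{\Lambda}\in\mathbb{R}^{N\times N_L}$ be the Star-to-RWG and Loop-to-RWG matrices of a triangular surface mesh, and let $\mathsf{\Sigma}_n=\mathsf{\Sigma}(\mathsf{\Sigma}^{\mathrm T}\mathsf{\Sigma})^+(\mathsf{\Sigma}^{\mathrm T}\mathsf{\Sigma})_n$ and $\mathsf{\Lambda}_n=\mathsf{\Lambda}(\mathsf{\Lambda}^{\mathrm T}\mathsf{\Lambda})^+(\mathsf{\Lambda}^{\mathrm T}\mathsf{\Lambda})_n$ be the filtered Star and Loop matrices (see context). Then for all $1\le n,m\le N_S$, $$\mathsf{\Sigma}_m^{\mathrm T}\mathsf{\Sigma}_n=\mathsf{\Sigma}_{\min\{n,m\}}^{\mathrm T}\mathsf{\Sigma}_{\min\{n,m\}},$$ and for all $1\le n,m\le N_L$, $$\mathsf{\Lambda}_m^{\mathrm T}\mathsf{\Lambda}_n=\mathsf{\Lambda}_{\min\{n,m\}}^{\mathrm T}\mathsf{\Lambda}_{\min\{n,m\}}.$$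
   Context: Consider a closed triangulated surface with $N$ edges, $N_S$ triangles and $N_L$ vertices. Each edge $m$ is shared by two triangles $c_m^+$, $c_m^-$. $[\mathsf{\Sigma}]_{mn}=1$ if cell $n$ is $c_m^+$, $-1$ if cell $n$ is $c_m^-$, $0$ otherwise. $[\mathsf{\Lambda}]_{mn}=\pm1$ when vertex $n$ is an endpoint of edge $m$ (opposite signs for the two endpoints, fixed by the orientation convention), $0$ otherwise. $^+$ denotes the Moore–Penrose pseudo-inverse. For $\mathsf{X}\in\{\mathsf{\Sigma},\mathsf{\Lambda}\}$ with $N_x$ columns, fix an SVD $\mathsf{X}=\mathsf{U}_X\mathsf{S}_X\mathsf{V}_X^{\mathrm T}$ with $\mathsf{V}_X$ orthogonal $N_x\times N_x$ and singular values $\sigma_{X,1}\ge\dots\ge\sigma_{X,N_x}\ge0$, so $\mathsf{X}^{\mathrm T}\mathsf{X}=\mathsf{V}_X\mathrm{diag}(\sigma_{X,i}^2)\mathsf{V}_X^{\mathrm T}$. For $1\le n\le N_x$, $\mathsf{L}_{X,n}$ is diagonal with $[\mathsf{L}_{X,n}]_{ii}=\sigma_{X,i}$ if $i>N_x-n$ and $0$ otherwise, and $(\mathsf{X}^{\mathrm T}\mathsf{X})_n=\mathsf{V}_X\mathsf{L}_{X,n}^2\mathsf{V}_X^{\mathrm T}$ (filtered graph Laplacian). *)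

From HB Require Import structures.
From mathcomp Require Import all_boot all_order all_algebra.
From mathcomp Require Import reals.
Set Implicit Arguments. Unset Strict Implicit. Unset Printing Implicit Defensive.
Import Order.TTheory GRing.Theory Num.Theory.
Local Open Scope ring_scope.

(* Combinatorial data of a closed triangulated surface mesh with
   N edges (indexed by 'I_N), NS triangles ('I_NS), NL vertices ('I_NL). *)
Record mesh (N NS NL : nat) := Mesh {
  (* the two triangles c_m^+ and c_m^- sharing edge m *)
  cplus  : 'I_N -> 'I_NS;
  cminus : 'I_N -> 'I_NS;
  cplus_neq_cminus : forall m, cplus m != cminus m;
  (* the two endpoints of edge m: vplus gets entry +1, vminus gets -1
     in the Loop-to-RWG matrix (orientation convention) *)
  vplus  : 'I_N -> 'I_NL;
  vminus : 'I_N -> 'I_NL;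
  vplus_neq_vminus : forall m, vplus m != vminus m;
  triangle_three_edges : forall c : 'I_NS,
    #|[set m : 'I_N | (cplus m == c) || (cminus m == c)]| = 3%N;
  vertex_used : forall v : 'I_NL, exists m, (vplus m == v) || (vminus m == v)
}.

Section Mats.
Variable R : realType.

Definition star_mx N NS NL (M : mesh N NS NL) : 'M[R]_(N, NS) :=
  \matrix_(m < N, n < NS)
    (if n == cplus M m then 1 else if n == cminus M m then -1 else 0).

Definition loop_mx N NS NL (M : mesh N NS NL) : 'M[R]_(N, NL) :=
  \matrix_(m < N, n < NL)
    (if n == vplus M m then 1 else if n == vminus M m then -1 else 0).

Definition is_MP_pinv p q (A : 'M[R]_(p, q)) (P : 'M[R]_(q, p)) : Prop :=
  [/\ A *m P *m A = A, P *m A *m P = P,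
      (A *m P)^T = A *m P & (P *m A)^T = P *m A].

Definition is_svd_V p q (X : 'M[R]_(p, q)) (V : 'M[R]_q) (sigma : 'I_q -> R)
  : Prop :=
  [/\ V^T *m V = 1%:M, V *m V^T = 1%:M,
      X^T *m X = V *m diag_mx (\row_i (sigma i ^+ 2)) *m V^T,
      (forall i, 0 <= sigma i) &
      (forall i j : 'I_q, (i <= j)%N -> sigma j <= sigma i)].

(* L_{X,n}: [L]_{ii} = sigma_i if i > Nx - n (1-based), i.e. Nx - n <= i
   with 0-based i; 0 otherwise *)
Definition Lfilt q (sigma : 'I_q -> R) (n : nat) : 'M[R]_q :=
  diag_mx (\row_(i < q) (if (q - n <= i)%N then sigma i else 0)).

(* filtered graph Laplacian (X^T X)_n = V L_n^2 V^T *)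
Definition filt_lap q (V : 'M[R]_q) (sigma : 'I_q -> R) (n : nat) : 'M[R]_q :=
  V *m (Lfilt sigma n *m Lfilt sigma n) *m V^T.

(* filtered matrix X_n = X (X^T X)^+ (X^T X)_n, with P = (X^T X)^+ *)
Definition filt_mx p q (X : 'M[R]_(p, q)) (P : 'M[R]_q) (V : 'M[R]_q)
  (sigma : 'I_q -> R) (n : nat) : 'M[R]_(p, q) :=
  X *m P *m filt_lap V sigma n.

End Mats.

From HB Require Import structures.
From mathcomp Require Import all_boot all_order all_algebra.
From mathcomp Require Import reals.
Set Implicit Arguments. Unset Strict Implicit. Unset Printing Implicit Defensive.
Import Order.TTheory GRing.Theory Num.Theory.
Local Open Scope ring_scope.

(* Write A = X^T X = V D V^T with D = diag(sigma_i^2), and let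
   E_k = V M_k V^T be the orthogonal projector onto the eigenvectors of the
   k smallest singular values (M_k keeps the last k diagonal entries).
   Then (X^T X)_k = E_k A = A E_k, and the Penrose identity A P A = A
   (together with its transpose A P^T A = A) collapses X_m^T X_n to
   E_m A E_n.  The projectors are nested, E_m E_n = E_(min m n), so this is
   A E_(min m n): it depends on m and n only through min m n.
   Nothing about the mesh is used. *)

Section SpectralProjectors.
Variables (R : comPzRingType) (q : nat).

Definition lowpass_mask (k : nat) : 'M[R]_q :=
  diag_mx (\row_(i < q) if (q - k <= i)%N then 1 else 0).

Lemma lowpass_maskM m n :
  lowpass_mask m *m lowpass_mask n = lowpass_mask (minn m n).
Proof.
rewrite mulmx_diag; congr diag_mx; apply/rowP => i; rewrite !mxE.
rewrite [in RHS]leq_subLR addn_minl leq_min -!leq_subLR.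
by case: (q - m <= i)%N; case: (q - n <= i)%N; rewrite ?mulr1 ?mulr0.
Qed.

Variable V : 'M[R]_q.

Definition spectral_proj k := V *m lowpass_mask k *m V^T.

Lemma tr_spectral_proj k : (spectral_proj k)^T = spectral_proj k.
Proof. by rewrite !trmx_mul trmxK tr_diag_mx mulmxA. Qed.

Hypothesis VTV : V^T *m V = 1%:M.

Lemma spectral_projM m n :
  spectral_proj m *m spectral_proj n = spectral_proj (minn m n).
Proof.
rewrite /spectral_proj !mulmxA -(mulmxA _ V^T V) VTV mulmx1.
by rewrite -(mulmxA V) lowpass_maskM.
Qed.

Lemma spectral_proj_diag k (d : 'rV[R]_q) :
  V *m diag_mx d *m V^T *m spectral_proj k
  = V *m (lowpass_mask k *m diag_mx d) *m V^T.
Proof.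
by rewrite diag_mxC /spectral_proj !mulmxA -(mulmxA _ V^T V) VTV mulmx1.
Qed.

Lemma diag_spectral_proj k (d : 'rV[R]_q) :
  spectral_proj k *m (V *m diag_mx d *m V^T)
  = V *m (lowpass_mask k *m diag_mx d) *m V^T.
Proof.
by rewrite /spectral_proj !mulmxA -(mulmxA _ V^T V) VTV mulmx1 -(mulmxA V).
Qed.

End SpectralProjectors.
Arguments lowpass_mask {R q} k.

Lemma sym_pinv_sandwich (R : comPzRingType) n (A P : 'M[R]_n) :
  A^T = A -> A *m P *m A = A -> A *m P^T *m A = A.
Proof. by move=> AT APA; rewrite -{1 2}AT -!trmx_mul mulmxA APA AT. Qed.

Section FilteredMatrices.
Variables (R : realType) (p q : nat) (X : 'M[R]_(p, q)).
Variables (P V : 'M[R]_q) (sigma : 'I_q -> R).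
Hypotheses (XP : is_MP_pinv (X^T *m X) P) (XV : is_svd_V X V sigma).

Local Notation A := (X^T *m X).
Local Notation E := (spectral_proj V).

Lemma trmx_gram : A^T = A.
Proof. by rewrite trmx_mul trmxK. Qed.

Lemma Lfilt_sqr k :
  Lfilt sigma k *m Lfilt sigma k
  = lowpass_mask k *m diag_mx (\row_i (sigma i ^+ 2)).
Proof.
rewrite /Lfilt /lowpass_mask !mulmx_diag; congr diag_mx; apply/rowP => i.
by rewrite !mxE; case: ifP; rewrite ?mul1r ?mul0r ?mulr0 // expr2.
Qed.

Lemma gram_spectral_projC k : A *m E k = E k *m A.
Proof.
case: XV => VTV _ XTX _ _.
by rewrite XTX spectral_proj_diag // diag_spectral_proj.
Qed.

Lemma filt_lapE k : filt_lap V sigma k = E k *m A.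
Proof.
case: XV => VTV _ XTX _ _.
by rewrite /filt_lap Lfilt_sqr XTX diag_spectral_proj.
Qed.

Lemma filt_mx_gram m n :
  (filt_mx X P V sigma m)^T *m filt_mx X P V sigma n = A *m E (minn m n).
Proof.
case: XP => APA _ _ _; case: XV => VTV _ _ _ _.
have APTA : A *m P^T *m A = A by apply: sym_pinv_sandwich; rewrite ?trmx_gram.
rewrite /filt_mx !filt_lapE -!gram_spectral_projC !(trmx_mul (X *m P)) trmx_mul.
rewrite tr_spectral_proj trmx_gram (trmx_mul X).
have -> : E m *m A *m (P^T *m X^T) *m (X *m P *m (A *m E n))
          = E m *m (A *m P^T *m A) *m P *m A *m E n by rewrite !mulmxA.
rewrite APTA -(mulmxA (E m) A P) -(mulmxA (E m) (A *m P) A) APA.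
by rewrite -gram_spectral_projC -(mulmxA A) spectral_projM.
Qed.

End FilteredMatrices.

Theorem mainTheorem2 (R : realType) (N NS NL : nat) (M : mesh N NS NL)
  (PS VS : 'M[R]_NS) (sigS : 'I_NS -> R)
  (PL VL : 'M[R]_NL) (sigL : 'I_NL -> R) :
  is_MP_pinv ((star_mx R M)^T *m star_mx R M) PS ->
  is_svd_V (star_mx R M) VS sigS ->
  is_MP_pinv ((loop_mx R M)^T *m loop_mx R M) PL ->
  is_svd_V (loop_mx R M) VL sigL ->
  (forall n m : nat, (1 <= n <= NS)%N -> (1 <= m <= NS)%N ->
     (filt_mx (star_mx R M) PS VS sigS m)^T *m filt_mx (star_mx R M) PS VS sigS n
     = (filt_mx (star_mx R M) PS VS sigS (minn n m))^T
         *m filt_mx (star_mx R M) PS VS sigS (minn n m)) /\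
  (forall n m : nat, (1 <= n <= NL)%N -> (1 <= m <= NL)%N ->
     (filt_mx (loop_mx R M) PL VL sigL m)^T *m filt_mx (loop_mx R M) PL VL sigL n
     = (filt_mx (loop_mx R M) PL VL sigL (minn n m))^T
         *m filt_mx (loop_mx R M) PL VL sigL (minn n m)).
Proof.
move=> SP SV LP LV.
by split=> n m _ _; rewrite !filt_mx_gram // minnn minnC.
Qed.
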